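(* For any constants $\alpha\ge 1$ and $\beta\ge 1$, there exist a number of processors $p$ and an in-tree task graph $T$ in the Pebble Game model such that no schedule $S$ of $T$ on $p$ processors satisfies both $C_{\max}(S)\le \alpha\, C^*_p(T)$ and $M(S)\le \beta\, M^*_p(T)$. Equivalently, no algorithm is simultaneously an $\alpha$-approximation for makespan minimization and a $\beta$-approximation for peak memory minimization when scheduling in-trees in the Pebble Game model.
   Context: Model. An in-tree task graph $T$ has nodes $\{1,\dots,n\}$ and a root; every non-root node $i$ has a parent, and $\mathrm{Children}(i)$ is the set of children of $i$. Each node $i$ has a processing time $w_i\ge 0$, an execution-file size $n_i\ge 0$ and an output-file size $f_i\ge 0$. A schedule on $p$ identical processors assigns each node $i$ a processor and a start time $\sigma_i\ge 0$; node $i$ runs without preemption during $[\sigma_i,\sigma_i+w_i)$, a processor runs at most one node at a time, and a node may start only after all its children have completed. The makespan is $C_{\max}=\max_i(\sigma_i+w_i)$. Memory: the output file of $i$ (size $f_i$) occupies memory from the start of $i$ until the completion of the parent of $i$ (for the root, until the end of the schedule), and the execution file of $i$ occupies memory while $i$ runs. The memory used at time $t$ is the total size of files present at time $t$; the peak memory $M(S)$ is the supremum over $t$ of the memory used. $C^*_p(T)$ denotes the minimum makespan and $M^*_p(T)$ the minimum peak memory over all schedules of $T$ on $p$ processors. The Pebble Game model is the special case $f_i=1$, $w_i=1$, $n_i=0$ for all $i$. An algorithm is an $\alpha$-approximation for makespan (resp. $\beta$-approximation for peak memory) if on every instance $(T,p)$ its schedule has makespan at most $\alpha C^*_p(T)$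 (resp. peak memory at most $\beta M^*_p(T)$). *)

From Stdlib Require Import Reals List.
Import ListNotations.
Open Scope R_scope.

(* An in-tree task graph with nodes 0..size-1 (the paper's 1..n). *)
Record InTree := {
  size : nat;
  root : nat;
  parent : nat -> nat;           (* parent of a non-root node; value at root irrelevant *)
  w : nat -> R;                  (* processing time *)
  nexec : nat -> R;
  fout : nat -> R;
  root_lt : (root < size)%nat;
  parent_lt : forall i, (i < size)%nat -> i <> root -> (parent i < size)%nat;
  (* every node reaches the root by following parents: the graph is a tree *)
  reaches_root : forall i, (i < size)%nat -> exists k, Nat.iter k parent i = root;
  w_nonneg : forall i, 0 <= w i;
  nexec_nonneg : forall i, 0 <= nexec i;
  fout_nonneg : forall i, 0 <= fout i
}.

Definition PebbleGame (T : InTree) : Prop :=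
  forall i, (i < size T)%nat -> fout T i = 1 /\ w T i = 1 /\ nexec T i = 0.

Record Schedule := { proc : nat -> nat; start : nat -> R }.

Definition running (T : InTree) (S : Schedule) (i : nat) (t : R) : Prop :=
  start S i <= t /\ t < start S i + w T i.

Definition ValidSchedule (T : InTree) (p : nat) (S : Schedule) : Prop :=
  (forall i, (i < size T)%nat -> (proc S i < p)%nat /\ 0 <= start S i) /\
  (forall i j t, (i < size T)%nat -> (j < size T)%nat -> i <> j ->
     proc S i = proc S j -> ~ (running T S i t /\ running T S j t)) /\
  (forall c, (c < size T)%nat -> c <> root T ->
     start S c + w T c <= start S (parent T c)).

Definition nodes (T : InTree) : list nat := seq 0 (size T).

Definition makespan (T : InTree) (S : Schedule) : R :=
  fold_right Rmax 0 (map (fun i => start S i + w T i) (nodes T)).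

Definition indic (a t b : R) : R :=
  if Rle_dec a t then (if Rlt_dec t b then 1 else 0) else 0.

(* output file of i lives from start of i until completion of its parent
   (for the root: until the end of the schedule); execution file lives while i runs *)
Definition out_end (T : InTree) (S : Schedule) (i : nat) : R :=
  if Nat.eq_dec i (root T) then makespan T S
  else start S (parent T i) + w T (parent T i).

Definition mem_used (T : InTree) (S : Schedule) (t : R) : R :=
  fold_right Rplus 0
    (map (fun i => fout T i * indic (start S i) t (out_end T S i)
                 + nexec T i * indic (start S i) t (start S i + w T i))
         (nodes T)).

Definition PeakMemory (T : InTree) (S : Schedule) (m : R) : Prop :=
  is_lub (fun x => exists t, x = mem_used T S t) m.

Definition OptMakespan (T : InTree) (p : nat) (c : R) : Prop :=
  (exists S, ValidSchedule T p S /\ makespan T S = c) /\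
  (forall S, ValidSchedule T p S -> c <= makespan T S).

Definition OptPeakMemory (T : InTree) (p : nat) (m : R) : Prop :=
  (exists S, ValidSchedule T p S /\ PeakMemory T S m) /\
  (forall S m', ValidSchedule T p S -> PeakMemory T S m' -> m <= m').

(** The comb in-tree with spine 0, N, 2N, ..., N*N and N teeth, each a chain
    of N - 1 unit tasks, has N^2 + 1 nodes.  Its critical path has length
    2N - 1, attained by starting every node as early as possible on its own
    processor; a sequential traversal tooth by tooth never holds more than 3
    files, the optimum since the root and its two children are alive
    together.  On the other hand
    every output file is alive at some integer time before the makespan C,
    so a schedule of peak memory M satisfies N^2 + 1 <= (C + 1) M.  A schedule
    with C <= alpha (2N - 1) and M <= 3 beta would thus give
    N^2 + 1 <= 6 alpha beta N, which fails once N > 6 alpha beta. *)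

From Stdlib Require Import Reals Lra Lia ZArith List.
Import ListNotations.
Open Scope R_scope.

Definition sumR (l : list nat) (f : nat -> R) : R := fold_right Rplus 0 (map f l).

Lemma sumR_le l f g : (forall i, In i l -> f i <= g i) -> sumR l f <= sumR l g.
Proof.
  induction l as [|a l IH]; intros Hfg; unfold sumR in *; simpl; [lra|].
  pose proof (Hfg a (or_introl eq_refl)).
  pose proof (IH (fun i Hi => Hfg i (or_intror Hi))); lra.
Qed.

Lemma sumR_ext l f g : (forall i, In i l -> f i = g i) -> sumR l f = sumR l g.
Proof. intros Hfg; unfold sumR; f_equal; now apply map_ext_in. Qed.

Lemma sumR_plus l f g : sumR l (fun i => f i + g i) = sumR l f + sumR l g.
Proof. induction l as [|a l IH]; unfold sumR in *; simpl; [|rewrite IH]; lra. Qed.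

Lemma sumR_const l c : sumR l (fun _ => c) = INR (length l) * c.
Proof.
  induction l as [|a l IH]; unfold sumR in *; cbn [map fold_right length]; [simpl; lra|].
  rewrite IH, S_INR; lra.
Qed.

Lemma sumR_nonneg l f : (forall i, In i l -> 0 <= f i) -> 0 <= sumR l f.
Proof.
  intros Hf; apply (Rle_trans _ (sumR l (fun _ => 0))); [|now apply sumR_le].
  rewrite sumR_const; lra.
Qed.

Lemma sumR_ge_term l f x : (forall i, In i l -> 0 <= f i) -> In x l -> f x <= sumR l f.
Proof.
  induction l as [|a l IH]; intros Hf Hx; [contradiction|].
  pose proof (sumR_nonneg l f (fun i Hi => Hf i (or_intror Hi))).
  pose proof (Hf a (or_introl eq_refl)).
  unfold sumR in *; simpl in *; destruct Hx as [<-|Hx]; [lra|].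
  pose proof (IH (fun i Hi => Hf i (or_intror Hi)) Hx); lra.
Qed.

Lemma sumR_swap l1 l2 (f : nat -> nat -> R) :
  sumR l1 (fun k => sumR l2 (fun i => f i k)) = sumR l2 (fun i => sumR l1 (fun k => f i k)).
Proof.
  induction l1 as [|a l1 IH]; unfold sumR in *; simpl.
  - induction l2; simpl; lra.
  - rewrite IH; symmetry; apply (sumR_plus l2 (fun i => f i a)).
Qed.

Lemma sumR_indicator l (b : nat -> bool) :
  sumR l (fun i => if b i then 1 else 0) = INR (length (filter b l)).
Proof.
  induction l as [|a l IH]; unfold sumR in *; cbn [map fold_right filter]; [simpl; lra|].
  rewrite IH; destruct (b a); cbn [length]; [rewrite S_INR|]; lra.
Qed.

Lemma floor_nat t : 0 <= t -> exists k, INR k <= t < INR k + 1.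
Proof.
  intros Ht; destruct (archimed t) as [Hup1 Hup2].
  assert (Hpos : (0 <= up t - 1)%Z) by (assert (0 < up t)%Z by (apply lt_IZR; lra); lia).
  exists (Z.to_nat (up t - 1)).
  rewrite INR_IZR_INZ, Z2Nat.id, minus_IZR by exact Hpos; simpl; lra.
Qed.

Lemma ceil_nat t : 0 <= t -> exists k, t <= INR k < t + 1.
Proof.
  intros Ht; destruct (floor_nat t Ht) as [k Hk].
  destruct (Req_dec (INR k) t); [exists k; lra|].
  exists (Datatypes.S k); rewrite S_INR; lra.
Qed.

Lemma INR_succ_le a b : (a < b)%nat -> INR a + 1 <= INR b.
Proof. intros Hab; rewrite <- S_INR; apply le_INR; lia. Qed.

Lemma INR_le_of_lt_succ a b t : INR a <= t -> t < INR b + 1 -> (a <= b)%nat.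
Proof.
  intros Ha Hb; destruct (Nat.le_gt_cases a b) as [|Hlt]; [assumption|].
  apply INR_succ_le in Hlt; lra.
Qed.

Lemma in_nodes T i : In i (nodes T) <-> (i < size T)%nat.
Proof. unfold nodes; rewrite in_seq; lia. Qed.

Definition live (T : InTree) (S : Schedule) (t : R) (i : nat) : bool :=
  if Rle_dec (start S i) t then if Rlt_dec t (out_end T S i) then true else false
  else false.

Lemma liveP T S t i : live T S t i = true <-> start S i <= t < out_end T S i.
Proof.
  unfold live; destruct (Rle_dec (start S i) t), (Rlt_dec t (out_end T S i));
    split; intros H;
    solve [easy | lra | discriminate].
Qed.

Lemma mem_used_pebble T S t : PebbleGame T ->
  mem_used T S t = INR (length (filter (live T S t) (nodes T))).
Proof.
  intros HT; rewrite <- sumR_indicator; unfold mem_used, sumR; f_equal.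
  apply map_ext_in; intros i Hi; apply in_nodes in Hi.
  destruct (HT i Hi) as [-> [-> ->]].
  unfold indic, live.
  destruct (Rle_dec (start S i) t), (Rlt_dec t (out_end T S i)); ring.
Qed.

Lemma mem_used_ge_live T S t l : PebbleGame T -> NoDup l ->
  (forall i, In i l -> (i < size T)%nat /\ live T S t i = true) ->
  INR (length l) <= mem_used T S t.
Proof.
  intros HT Hl Hlive; rewrite mem_used_pebble by exact HT.
  apply le_INR, NoDup_incl_length; [exact Hl|].
  intros i Hi; destruct (Hlive i Hi); apply filter_In; rewrite in_nodes; auto.
Qed.

Lemma mem_used_le_live T S t l : PebbleGame T ->
  (forall i, (i < size T)%nat -> live T S t i = true -> In i l) ->
  mem_used T S t <= INR (length l).
Proof.
  intros HT Hlive; rewrite mem_used_pebble by exact HT.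
  apply le_INR, NoDup_incl_length; [apply NoDup_filter, seq_NoDup|].
  intros i Hi; apply filter_In in Hi as [Hi Hl]; apply in_nodes in Hi; auto.
Qed.

Lemma mem_used_le_peak T S M t : PeakMemory T S M -> mem_used T S t <= M.
Proof. intros [Hub _]; apply Hub; eauto. Qed.

Lemma peak_attained T S M t0 :
  (forall t, mem_used T S t <= M) -> M <= mem_used T S t0 -> PeakMemory T S M.
Proof.
  intros Hub Hatt; split.
  - intros x [t ->]; apply Hub.
  - intros b Hb; apply (Rle_trans _ _ _ Hatt), Hb; eauto.
Qed.

Lemma makespan_nonneg T S : 0 <= makespan T S.
Proof.
  unfold makespan; induction (nodes T); simpl; [lra|].
  apply (Rle_trans _ _ _ IHl), Rmax_r.
Qed.

Lemma completion_le_makespan T S i : (i < size T)%nat -> start S i + w T i <= makespan T S.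
Proof.
  intros Hi; apply in_nodes in Hi; unfold makespan; induction (nodes T); [contradiction|].
  simpl; destruct Hi as [<-|Hi]; [apply Rmax_l|].
  apply (Rle_trans _ _ _ (IHl Hi)), Rmax_r.
Qed.

Lemma makespan_le T S m : 0 <= m ->
  (forall i, (i < size T)%nat -> start S i + w T i <= m) -> makespan T S <= m.
Proof.
  intros Hm Hle; unfold makespan.
  assert (Hin : forall i, In i (nodes T) -> start S i + w T i <= m)
    by (intros i Hi; apply Hle, in_nodes, Hi).
  induction (nodes T); simpl; [exact Hm|].
  apply Rmax_lub; [apply Hin; left | apply IHl; intros; apply Hin; right]; auto.
Qed.

Lemma completion_le_out_end T p S i : ValidSchedule T p S -> (i < size T)%nat ->
  start S i + w T i <= out_end T S i.
Proof.
  intros [_ [_ Hprec]] Hi; unfold out_end.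
  destruct (Nat.eq_dec i (root T)) as [_|Hr]; [now apply completion_le_makespan|].
  pose proof (Hprec i Hi Hr); pose proof (w_nonneg T (parent T i)); lra.
Qed.

Lemma live_at_start T p S v : PebbleGame T -> ValidSchedule T p S -> (v < size T)%nat ->
  live T S (start S v) v = true.
Proof.
  intros HT HV Hv; apply liveP.
  pose proof (completion_le_out_end T p S v HV Hv); destruct (HT v Hv) as [_ [Hw _]]; lra.
Qed.

Lemma live_child_at_parent_start T p S c : PebbleGame T -> ValidSchedule T p S ->
  (c < size T)%nat -> c <> root T -> live T S (start S (parent T c)) c = true.
Proof.
  intros HT HV Hc Hr; apply liveP; unfold out_end.
  destruct (Nat.eq_dec c (root T)) as [|_]; [contradiction|].
  destruct HV as [_ [_ Hprec]]; pose proof (Hprec c Hc Hr).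
  destruct (HT c Hc) as [_ [Hwc _]].
  destruct (HT (parent T c) (parent_lt T c Hc Hr)) as [_ [Hwp _]]; lra.
Qed.

Definition parent_chain (T : InTree) (v : nat -> nat) (m : nat) : Prop :=
  (forall j, (j <= m)%nat -> (v j < size T)%nat) /\
  (forall j, (j < m)%nat -> v j <> root T /\ parent T (v j) = v (j + 1)%nat).

Lemma start_along_parent_chain T p S v m : PebbleGame T -> ValidSchedule T p S ->
  parent_chain T v m -> start S (v 0%nat) + INR m <= start S (v m).
Proof.
  intros HT [_ [_ Hprec]] [Hsize Hpar]; induction m as [|m IH]; [simpl; lra|].
  assert (Hm : (m < Datatypes.S m)%nat) by lia.
  destruct (Hpar m Hm) as [Hr Hp].
  pose proof (Hprec (v m) (Hsize m (Nat.le_succ_diag_r m)) Hr) as Hstep.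
  destruct (HT (v m) (Hsize m (Nat.le_succ_diag_r m))) as [_ [Hw _]].
  rewrite Hp, Nat.add_1_r in Hstep; rewrite S_INR.
  enough (start S (v 0%nat) + INR m <= start S (v m)) by lra.
  apply IH; intros j Hj; [apply Hsize | apply Hpar]; lia.
Qed.

Lemma makespan_ge_parent_chain T p S v m : PebbleGame T -> ValidSchedule T p S ->
  parent_chain T v m -> INR m + 1 <= makespan T S.
Proof.
  intros HT HV Hchain.
  pose proof (start_along_parent_chain T p S v m HT HV Hchain).
  destruct Hchain as [Hsize _].
  destruct HV as [Hproc _]; destruct (Hproc (v 0%nat) (Hsize 0%nat (Nat.le_0_l m))).
  pose proof (completion_le_makespan T S (v m) (Hsize m (Nat.le_refl m))).
  destruct (HT (v m) (Hsize m (Nat.le_refl m))) as [_ [Hw _]]; lra.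
Qed.

Definition unit_schedule (pr f : nat -> nat) : Schedule :=
  {| proc := pr; start := fun i => INR (f i) |}.

Lemma unit_schedule_valid T p pr f : PebbleGame T ->
  (forall i, (i < size T)%nat -> (pr i < p)%nat) ->
  (forall i j, (i < size T)%nat -> (j < size T)%nat -> i <> j -> pr i = pr j -> f i <> f j) ->
  (forall c, (c < size T)%nat -> c <> root T -> (f c < f (parent T c))%nat) ->
  ValidSchedule T p (unit_schedule pr f).
Proof.
  intros HT Hproc Hdisj Hprec; split; [|split]; simpl.
  - intros i Hi; split; [auto | apply pos_INR].
  - intros i j t Hi Hj Hij Hpr [[Hi1 Hi2] [Hj1 Hj2]]; simpl in *.
    destruct (HT i Hi) as [_ [Hwi _]], (HT j Hj) as [_ [Hwj _]].
    destruct (Nat.lt_total (f i) (f j)) as [Hlt|[Heq|Hlt]];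
      [| exact (Hdisj i j Hi Hj Hij Hpr Heq) |];
      apply INR_succ_le in Hlt; lra.
  - intros c Hc Hr; destruct (HT c Hc) as [_ [Hwc _]]; rewrite Hwc.
    apply INR_succ_le, Hprec; auto.
Qed.

Lemma size_le_sum_mem_integer_times T p S K : PebbleGame T -> ValidSchedule T p S ->
  makespan T S <= INR K -> INR (size T) <= sumR (seq 0 K) (fun k => mem_used T S (INR k)).
Proof.
  intros HT HV HK.
  assert (Hind : forall k, mem_used T S (INR k) =
      sumR (nodes T) (fun i => if live T S (INR k) i then 1 else 0))
    by (intros k; rewrite sumR_indicator; apply mem_used_pebble, HT).
  rewrite (sumR_ext _ _ _ (fun k _ => Hind k)), sumR_swap.
  replace (INR (size T)) with (sumR (nodes T) (fun _ => 1))
    by (rewrite sumR_const; unfold nodes; rewrite length_seq; ring).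
  apply sumR_le; intros i Hi; apply in_nodes in Hi.
  destruct (proj1 HV i Hi) as [_ Hs].
  destruct (ceil_nat (start S i) Hs) as [k Hk].
  pose proof (completion_le_makespan T S i Hi).
  pose proof (completion_le_out_end T p S i HV Hi).
  destruct (HT i Hi) as [_ [Hw _]].
  assert (Hlive : live T S (INR k) i = true) by (apply liveP; lra).
  assert (HkK : In k (seq 0 K)).
  { apply in_seq; assert (Hlt : INR k < INR K) by lra; apply INR_lt in Hlt; lia. }
  apply (Rle_trans _ (if live T S (INR k) i then 1 else 0)); [rewrite Hlive; lra|].
  apply (sumR_ge_term _ (fun k' => if live T S (INR k') i then 1 else 0) k); [|exact HkK].
  intros k' _; destruct (live T S (INR k') i); lra.
Qed.

Lemma peak_nonneg T S M : PebbleGame T -> PeakMemory T S M -> 0 <= M.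
Proof.
  intros HT HM; apply (Rle_trans _ (mem_used T S 0)); [|now apply mem_used_le_peak].
  rewrite mem_used_pebble by exact HT; apply pos_INR.
Qed.

Lemma size_le_makespan_peak T p S M : PebbleGame T -> ValidSchedule T p S ->
  PeakMemory T S M -> INR (size T) <= (makespan T S + 1) * M.
Proof.
  intros HT HV HM.
  destruct (ceil_nat (makespan T S) (makespan_nonneg T S)) as [K HK].
  pose proof (size_le_sum_mem_integer_times T p S K HT HV ltac:(lra)) as Hsum.
  assert (Hbound : sumR (seq 0 K) (fun k => mem_used T S (INR k)) <= INR K * M).
  { rewrite <- (length_seq K 0) at 2; rewrite <- sumR_const.
    apply sumR_le; intros k _; apply (mem_used_le_peak T S M), HM. }
  pose proof (peak_nonneg T S M HT HM).
  assert (INR K * M <= (makespan T S + 1) * M) by (apply Rmult_le_compat_r; lra).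
  lra.
Qed.

(* Spine node k*N has children (k-1)*N and k*N-1; tooth k is the chain
   k*N+1 -> ... -> k*N+N-1 -> (k+1)*N.  Node 0 is a leaf of the spine. *)
Definition comb_parent (N i : nat) : nat :=
  if Nat.eqb (i mod N) 0 then (i + N)%nat else (i + 1)%nat.

Lemma comb_parent_bounds N i : (i < N * N)%nat -> (i < comb_parent N i <= N * N)%nat.
Proof.
  intros Hi; unfold comb_parent; destruct (Nat.eqb_spec (i mod N) 0) as [Hr|]; [|lia].
  assert (HN : (N > 0)%nat) by (destruct N; simpl in Hi; lia).
  pose proof (Nat.div_mod_eq i N) as Hdiv; rewrite Hr in Hdiv.
  assert (i / N < N)%nat by nia; nia.
Qed.

Lemma comb_parent_lt N i : (i < N * N + 1)%nat -> i <> (N * N)%nat ->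
  (comb_parent N i < N * N + 1)%nat.
Proof. intros Hi Hr; pose proof (comb_parent_bounds N i ltac:(lia)); lia. Qed.

Lemma comb_reaches_root N i : (i < N * N + 1)%nat ->
  exists k, Nat.iter k (comb_parent N) i = (N * N)%nat.
Proof.
  remember (N * N - i)%nat as d eqn:Hd; revert i Hd.
  induction d as [d IH] using (well_founded_induction lt_wf); intros i Hd Hi.
  destruct (Nat.eq_dec i (N * N)) as [->|Hr]; [now exists 0%nat|].
  pose proof (comb_parent_bounds N i ltac:(lia)).
  destruct (IH (N * N - comb_parent N i)%nat ltac:(lia) (comb_parent N i) eq_refl
    ltac:(lia)) as [k Hk].
  exists (Datatypes.S k); rewrite Nat.iter_succ_r; exact Hk.
Qed.

Definition comb (N : nat) : InTree := {|
  size := N * N + 1; root := N * N; parent := comb_parent N;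
  w := fun _ => 1; nexec := fun _ => 0; fout := fun _ => 1;
  root_lt := ltac:(lia);
  parent_lt := comb_parent_lt N;
  reaches_root := comb_reaches_root N;
  w_nonneg := fun _ => Rle_0_1;
  nexec_nonneg := fun _ => Rle_refl 0;
  fout_nonneg := fun _ => Rle_0_1 |}.

Lemma comb_pebble N : PebbleGame (comb N).
Proof. intros i _; simpl; auto. Qed.

Lemma comb_parent_tooth N i : (i mod N <> 0)%nat -> comb_parent N i = (i + 1)%nat.
Proof. intros Hr; unfold comb_parent; destruct (Nat.eqb_spec (i mod N) 0); lia. Qed.

Lemma comb_parent_spine N k : comb_parent N (k * N) = (k * N + N)%nat.
Proof. unfold comb_parent; now rewrite Nat.Div0.mod_mul. Qed.

Lemma comb_children_of_root N : (2 <= N)%nat ->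
  comb_parent N (N * N - 1) = (N * N)%nat /\ comb_parent N ((N - 1) * N) = (N * N)%nat.
Proof.
  intros HN; split.
  - rewrite comb_parent_tooth; [lia|].
    rewrite <- (Nat.mod_unique (N * N - 1) N (N - 1) (N - 1)); lia + nia.
  - rewrite comb_parent_spine; nia.
Qed.

Definition comb_critical_path (N j : nat) : nat :=
  if Nat.ltb j (N - 1) then (j + 1)%nat else ((j + 2 - N) * N)%nat.

Lemma comb_critical_path_chain N : (2 <= N)%nat ->
  parent_chain (comb N) (comb_critical_path N) (2 * N - 2).
Proof.
  intros HN; unfold comb_critical_path; split; intros j Hj; simpl.
  - destruct (Nat.ltb_spec j (N - 1)); nia.
  - destruct (Nat.ltb_spec j (N - 1)); destruct (Nat.ltb_spec (j + 1) (N - 1)).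
    + split; [nia|]; rewrite comb_parent_tooth; [lia|]; rewrite Nat.mod_small; lia.
    + split; [nia|]; rewrite comb_parent_tooth by (rewrite Nat.mod_small; lia).
      replace (j + 1 + 2 - N)%nat with 1%nat by lia; lia.
    + lia.
    + split; [nia|]; rewrite comb_parent_spine; nia.
Qed.

Lemma comb_makespan_lb N p S : (2 <= N)%nat -> ValidSchedule (comb N) p S ->
  2 * INR N - 1 <= makespan (comb N) S.
Proof.
  intros HN HV.
  pose proof (makespan_ge_parent_chain _ _ _ _ _ (comb_pebble N) HV
    (comb_critical_path_chain N HN)) as Hmk.
  rewrite minus_INR, mult_INR in Hmk by lia; simpl in Hmk; lra.
Qed.

Lemma comb_mem_at_root N p S : (2 <= N)%nat -> ValidSchedule (comb N) p S ->
  3 <= mem_used (comb N) S (start S (N * N)).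
Proof.
  intros HN HV; destruct (comb_children_of_root N HN) as [Hpar1 Hpar2].
  replace 3 with (INR (length [N * N; N * N - 1; (N - 1) * N]%nat)) by (simpl; lra).
  apply mem_used_ge_live; [apply comb_pebble| |].
  - repeat constructor; simpl; nia.
  - intros i [<-|[<-|[<-|[]]]]; simpl; split; try nia.
    + exact (live_at_start (comb N) p S (N * N) (comb_pebble N) HV ltac:(simpl; lia)).
    + rewrite <- Hpar1 at 1.
      exact (live_child_at_parent_start (comb N) p S (N * N - 1) (comb_pebble N) HV
        ltac:(simpl; nia) ltac:(simpl; nia)).
    + rewrite <- Hpar2 at 1.
      exact (live_child_at_parent_start (comb N) p S ((N - 1) * N) (comb_pebble N) HV
        ltac:(simpl; nia) ltac:(simpl; nia)).
Qed.

(* Earliest start times: tooth node k*N+r (0 < r < N) at r-1, spine node k*N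
   (0 < k) at N+k-2, once tooth k-1 and spine node (k-1)*N are done. *)
Definition comb_asap (N i : nat) : nat :=
  if Nat.eqb (i mod N) 0 then (if Nat.eqb i 0 then 0 else N + i / N - 2)
  else (i mod N - 1)%nat.

Lemma comb_asap_parent N c : (2 <= N)%nat -> (c < N * N)%nat ->
  (comb_asap N c < comb_asap N (comb_parent N c))%nat.
Proof.
  intros HN Hc; unfold comb_parent, comb_asap.
  pose proof (Nat.div_mod_eq c N) as Hdiv; pose proof (Nat.mod_upper_bound c N ltac:(lia)).
  set (q := (c / N)%nat) in *; set (r := (c mod N)%nat) in *.
  destruct (Nat.eqb_spec r 0).
  - rewrite <- (Nat.div_unique (c + N) N (q + 1) 0), <- (Nat.mod_unique (c + N) N (q + 1) 0)
      by lia; simpl.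
    destruct (Nat.eqb_spec (c + N) 0), (Nat.eqb_spec c 0); lia.
  - destruct (Nat.lt_ge_cases (r + 1) N).
    + rewrite <- (Nat.mod_unique (c + 1) N q (r + 1)) by lia.
      destruct (Nat.eqb_spec (r + 1) 0); lia.
    + rewrite <- (Nat.div_unique (c + 1) N (q + 1) 0), <- (Nat.mod_unique (c + 1) N (q + 1) 0)
        by lia; simpl.
      destruct (Nat.eqb_spec (c + 1) 0); lia.
Qed.

Lemma comb_asap_bound N i : (2 <= N)%nat -> (i <= N * N)%nat -> (comb_asap N i + 2 <= 2 * N)%nat.
Proof.
  intros HN Hi; unfold comb_asap.
  pose proof (Nat.div_mod_eq i N); pose proof (Nat.mod_upper_bound i N ltac:(lia)).
  destruct (Nat.eqb_spec (i mod N) 0), (Nat.eqb_spec i 0); try lia.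
  assert (i / N <= N)%nat by nia; lia.
Qed.

Lemma comb_opt_makespan N : (2 <= N)%nat -> OptMakespan (comb N) (N * N + 1) (2 * INR N - 1).
Proof.
  intros HN; split; [|intros S HV; exact (comb_makespan_lb N _ S HN HV)].
  assert (HV : ValidSchedule (comb N) (N * N + 1) (unit_schedule (fun i => i) (comb_asap N))).
  { apply unit_schedule_valid; [apply comb_pebble | auto | auto |].
    intros c Hc Hr; apply comb_asap_parent; simpl in *; lia. }
  exists (unit_schedule (fun i => i) (comb_asap N)); split; [exact HV|].
  apply Rle_antisym; [|exact (comb_makespan_lb N _ _ HN HV)].
  assert (HN2 : INR 2 <= INR N) by (apply le_INR; exact HN); simpl in HN2.
  apply makespan_le; [lra|]; intros i Hi; simpl in *.
  pose proof (le_INR _ _ (comb_asap_bound N i HN ltac:(lia))) as Hb.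
  rewrite plus_INR, mult_INR in Hb; simpl in Hb; lra.
Qed.

(* At time k of the sequential schedule, the only possibly live files are
   those of k, k-1 and of the spine node still waiting for its parent. *)
Definition comb_pending_spine (N k : nat) : nat :=
  if Nat.eqb (k mod N) 0 then (k - N)%nat else (N * (k / N))%nat.

Lemma comb_live_sequential N i k : (2 <= N)%nat -> (i < N * N)%nat ->
  (i <= k <= comb_parent N i)%nat -> i = k \/ i = (k - 1)%nat \/ i = comb_pending_spine N k.
Proof.
  intros HN Hi Hk; unfold comb_parent, comb_pending_spine in *.
  pose proof (Nat.div_mod_eq i N); pose proof (Nat.div_mod_eq k N).
  pose proof (Nat.mod_upper_bound i N ltac:(lia)); pose proof (Nat.mod_upper_bound k N ltac:(lia)).
  set (qi := (i / N)%nat) in *; set (ri := (i mod N)%nat) in *.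
  set (qk := (k / N)%nat) in *; set (rk := (k mod N)%nat) in *.
  destruct (Nat.eqb_spec ri 0), (Nat.eqb_spec rk 0); try lia.
  - assert (qk = qi \/ qk = qi + 1)%nat by nia; nia.
  - assert (qk = qi) by nia; subst qk; lia.
Qed.

Definition sequential : Schedule := unit_schedule (fun _ => 0%nat) (fun i => i).

Lemma comb_sequential_valid N : ValidSchedule (comb N) (N * N + 1) sequential.
Proof.
  apply unit_schedule_valid; [apply comb_pebble | intros; lia | auto |].
  intros c Hc Hr; apply comb_parent_bounds; simpl in *; lia.
Qed.

Lemma comb_sequential_mem_le N t : (2 <= N)%nat -> mem_used (comb N) sequential t <= 3.
Proof.
  intros HN; destruct (Rlt_or_le t 0) as [Ht|Ht].
  - apply (Rle_trans _ (INR (length (@nil nat)))); [|simpl; lra].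
    apply mem_used_le_live; [apply comb_pebble|]; intros i _ Hlive.
    apply liveP in Hlive; pose proof (pos_INR i); simpl in Hlive; lra.
  - destruct (floor_nat t Ht) as [k Hk].
    replace 3 with (INR (length [k; k - 1; comb_pending_spine N k]%nat)) by (simpl; lra).
    apply mem_used_le_live; [apply comb_pebble|]; intros i Hi Hlive.
    apply liveP in Hlive; unfold out_end in Hlive; simpl in Hi, Hlive.
    assert (Hik : (i <= k)%nat) by (apply (INR_le_of_lt_succ _ _ t); lra).
    destruct (Nat.eq_dec i (N * N)) as [->|Hr].
    + assert (makespan (comb N) sequential <= INR (N * N + 1)).
      { apply makespan_le; [apply pos_INR|]; intros j Hj; apply INR_succ_le, Hj. }
      assert (Hki : (k <= N * N)%nat).
      { apply (INR_le_of_lt_succ _ _ t); [lra|].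
        rewrite plus_INR in *; simpl in *; lra. }
      left; lia.
    + assert (Hkp : (k <= comb_parent N i)%nat) by (apply (INR_le_of_lt_succ _ _ t); lra).
      destruct (comb_live_sequential N i k HN ltac:(lia) (conj Hik Hkp)) as [-> | [-> | ->]];
        simpl; auto.
Qed.

Lemma comb_opt_peak N : (2 <= N)%nat -> OptPeakMemory (comb N) (N * N + 1) 3.
Proof.
  intros HN; pose proof (comb_sequential_valid N) as HV; split.
  - exists sequential; split; [exact HV|].
    apply (peak_attained _ _ _ (start sequential (N * N))).
    + intros t; exact (comb_sequential_mem_le N t HN).
    + exact (comb_mem_at_root N _ _ HN HV).
  - intros S m' HV' HM; apply (Rle_trans _ _ _ (comb_mem_at_root N _ S HN HV')).
    now apply mem_used_le_peak.
Qed.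

Theorem theorem2 :
  forall alpha beta : R, 1 <= alpha -> 1 <= beta ->
  exists (p : nat) (T : InTree) (Cstar Mstar : R),
    PebbleGame T /\ OptMakespan T p Cstar /\ OptPeakMemory T p Mstar /\
    forall S : Schedule, ValidSchedule T p S ->
      forall M : R, PeakMemory T S M ->
        ~ (makespan T S <= alpha * Cstar /\ M <= beta * Mstar).
Proof.
  intros alpha beta Ha Hb.
  assert (Hab : 1 <= alpha * beta) by nra.
  destruct (ceil_nat (6 * alpha * beta + 2) ltac:(nra)) as [N HN].
  assert (HN2 : (2 <= N)%nat) by (apply INR_le_of_lt_succ with (t := INR N); simpl; lra).
  exists (N * N + 1)%nat, (comb N), (2 * INR N - 1), 3.
  split; [apply comb_pebble|].
  split; [now apply comb_opt_makespan|].
  split; [now apply comb_opt_peak|].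
  intros S HV M HM [Hmk HMb].
  pose proof (size_le_makespan_peak _ _ _ _ (comb_pebble N) HV HM) as Harea.
  pose proof (Rle_trans _ _ _ (comb_mem_at_root N _ S HN2 HV) (mem_used_le_peak _ _ _ _ HM)).
  simpl size in Harea; rewrite plus_INR, mult_INR in Harea; simpl in Harea.
  assert (Hcm : (makespan (comb N) S + 1) * M <= 2 * alpha * INR N * (3 * beta)).
  { apply Rmult_le_compat; nra. }
  nra.
Qed.
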